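(* Let $R$ be a commutative ring and $\underline a=a_1,\dots,a_r$ an $R$-regular sequence. Suppose $B$ and $B'$ are matrices with $r$ rows and entries in $R$ such that $(\underline a\cdot B)=(\underline a\cdot B')$. Then $(\underline a\cdot B)+I_r(B)=(\underline a\cdot B')+I_r(B')$.
   Context: $(\underline a\cdot B)$ is the ideal generated by the entries of $[a_1\cdots a_r]\cdot B$; $I_r(B)$ is the ideal of $r\times r$ minors of $B$. *)

From HB Require Import structures.
From mathcomp Require Import all_boot all_order all_algebra.
Set Implicit Arguments. Unset Strict Implicit. Unset Printing Implicit Defensive.
Import GRing.Theory.
Local Open Scope ring_scope.

Definition gen_ideal (R : comRingType) (S : R -> Prop) (x : R) : Prop :=
  exists (k : nat) (c g : 'I_k -> R),
    (forall i, S (g i)) /\ x = \sum_(i < k) c i * g i.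

(* union of generating sets (ideal sum = ideal generated by the union) *)
Definition gens_union (R : Type) (S T : R -> Prop) (y : R) : Prop := S y \/ T y.

(* generators of (a_1,...,a_i) : the first i entries of a *)
Definition prefix_gens (R : comRingType) (r : nat) (a : 'rV[R]_r) (i : nat)
  (y : R) : Prop := exists j : 'I_r, (j < i)%N /\ y = a 0 j.

Definition regular_seq (R : comRingType) (r : nat) (a : 'rV[R]_r) : Prop :=
  (forall (i : 'I_r) (x : R),
      gen_ideal (prefix_gens a i) (a 0 i * x) -> gen_ideal (prefix_gens a i) x)
  /\ ~ gen_ideal (prefix_gens a r) 1.

(* generators of (a . B): the entries of the row [a_1 ... a_r] * B *)
Definition aB_gens (R : comRingType) (r n : nat) (a : 'rV[R]_r)
  (B : 'M[R]_(r, n)) (y : R) : Prop := exists j : 'I_n, y = (a *m B) 0 j.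

(* generators of I_r(B): the r x r minors of B *)
Definition minor_gens (R : comRingType) (r n : nat) (B : 'M[R]_(r, n))
  (y : R) : Prop :=
  exists f : 'I_r -> 'I_n,
    (forall i j : 'I_r, (i < j)%N -> (f i < f j)%N) /\ y = \det (colsub f B).

(* By symmetry it suffices to show that (a.B) <= (a.B') forces every maximal
   minor of B into (a.B') + I_r(B').  Take an r x r matrix M whose first k
   columns are columns of B' and whose other columns c satisfy
   (a.M)_c \in (a.B'), and induct on the number of the latter.  The next
   column is B'v + s with a.s = 0.  Expanding det M along it, the B'v part is
   a combination of determinants with one more column of B'.  As a is
   regular, the syzygy s is a combination of Koszul syzygies
   a_l e_j - a_j e_l, and by Cramer's rule putting such a syzygy in column k
   gives a determinant in the ideal of the other entries of a.M, which all
   lie in (a.B'). *)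

From HB Require Import structures.
From mathcomp Require Import all_boot all_order all_algebra fingroup perm.
Set Implicit Arguments.
Unset Strict Implicit.
Unset Printing Implicit Defensive.
Import GRing.Theory.
Local Open Scope ring_scope.

Section GenIdeal.
Variable R : comRingType.
Implicit Types (S T : R -> Prop) (x y : R).

Lemma gen_ideal0 S : gen_ideal S 0.
Proof.
by exists 0%N, (fun _ => 0), (fun _ => 0); rewrite big_ord0; split=> [[]|].
Qed.

Lemma gen_ideal_gen S y : S y -> gen_ideal S y.
Proof.
by move=> Sy; exists 1%N, (fun _ => 1), (fun _ => y); rewrite big_ord1 mul1r.
Qed.

Lemma gen_idealMl S y x : gen_ideal S x -> gen_ideal S (y * x).
Proof.
case=> k [c [g [Sg ->]]]; exists k, (fun i => y * c i), g; split=> //.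
by rewrite mulr_sumr; apply: eq_bigr => i _; rewrite mulrA.
Qed.

Lemma gen_idealN S x : gen_ideal S x -> gen_ideal S (- x).
Proof. by rewrite -mulN1r; apply: gen_idealMl. Qed.

Lemma gen_idealD S x y : gen_ideal S x -> gen_ideal S y -> gen_ideal S (x + y).
Proof.
case=> k1 [c1 [g1 [S1 ->]]] [k2 [c2 [g2 [S2 ->]]]].
exists (k1 + k2)%N,
  (fun i => match split i with inl j => c1 j | inr j => c2 j end),
  (fun i => match split i with inl j => g1 j | inr j => g2 j end).
split=> [i|]; first by case: (split i).
rewrite big_split_ord /=; congr (_ + _); apply: eq_bigr => j _.
  by rewrite (unsplitK (inl _ : 'I_k1 + 'I_k2)).
by rewrite (unsplitK (inr _ : 'I_k1 + 'I_k2)).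
Qed.

Lemma gen_ideal_sum S (I : finType) (P : pred I) (F : I -> R) :
  (forall i, P i -> gen_ideal S (F i)) -> gen_ideal S (\sum_(i | P i) F i).
Proof.
by apply: (big_ind (gen_ideal S)); [exact: gen_ideal0 | exact: gen_idealD].
Qed.

Lemma gen_ideal_trans S T x :
  (forall y, S y -> gen_ideal T y) -> gen_ideal S x -> gen_ideal T x.
Proof.
move=> ST [k [c [g [Sg ->]]]].
by apply: gen_ideal_sum => i _; apply/gen_idealMl/ST.
Qed.

Lemma gen_ideal_unionl S T x : gen_ideal S x -> gen_ideal (gens_union S T) x.
Proof. by apply: gen_ideal_trans => y Sy; apply: gen_ideal_gen; left. Qed.

Lemma gen_ideal_unionr S T x : gen_ideal T x -> gen_ideal (gens_union S T) x.
Proof. by apply: gen_ideal_trans => y Ty; apply: gen_ideal_gen; right. Qed.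

Lemma gen_ideal_coefs S (I : finType) (P : pred I) (F : I -> R) x :
  (forall y, S y -> exists2 i, P i & y = F i) ->
  gen_ideal S x -> exists v : I -> R, x = \sum_(i | P i) v i * F i.
Proof.
move=> SF [k [c [g [Sg ->]]]].
have /fin_all_exists2 [h Ph gh] : forall p, exists2 i, P i & g p = F i.
  by move=> p; apply: SF.
exists (fun i => \sum_(p | h p == i) c p).
rewrite (partition_big h P) //=; apply: eq_bigr => i _.
by rewrite mulr_suml; apply: eq_bigr => p /eqP <-; rewrite gh.
Qed.

End GenIdeal.

Lemma injective_ord_sort (r m : nat) (g : 'I_r -> 'I_m) : injective g ->
  exists (s : 'S_r) (f : 'I_r -> 'I_m),
    (forall i j : 'I_r, (i < j)%N -> (f i < f j)%N) /\ g =1 f \o s.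
Proof.
move=> g_inj; pose e := enum [set g i | i in 'I_r].
have size_e : size e = r by rewrite -cardE card_imset // card_ord.
have g_in_e i : g i \in e by rewrite mem_enum; apply: imset_f.
have rank_lt (i : 'I_r) : (index (g i) e < r)%N by rewrite -size_e index_mem.
have rank_inj : injective (fun i => Ordinal (rank_lt i)).
  move=> i j /(congr1 val) /= /(congr1 (nth (g i) e)).
  by rewrite !nth_index //; apply: g_inj.
exists (perm rank_inj), (fun i => nth (g i) e i); split=> [i j lt_ij | i].
  have e_sorted : sorted ltn (map val e).
    rewrite sorted_map /e /enum_mem -enumT; apply: sorted_filter.
      exact: ltn_trans.
    by rewrite -sorted_map val_enum_ord iota_ltn_sorted.
  rewrite (set_nth_default (g j) (g i)) ?size_e //.
  have := sorted_ltn_nth ltn_trans 0%N e_sorted i j.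
  rewrite !inE size_map size_e !ltn_ord => /(_ isT isT lt_ij).
  by rewrite !(nth_map (g j)) ?size_e.
by rewrite /= permE /= (set_nth_default (g i)) ?size_e // nth_index.
Qed.

Lemma det_colsub_minor_gens (R : comRingType) (r m : nat) (B : 'M[R]_(r, m))
    (g : 'I_r -> 'I_m) :
  gen_ideal (minor_gens B) (\det (colsub g B)).
Proof.
have [/injectiveP g_inj | /injectivePn [i [j neq_ij eq_gij]]] :=
  boolP (injectiveb g).
  have [s [f [f_incr gfs]]] := injective_ord_sort g_inj.
  have -> : colsub g B = col_perm s (colsub f B).
    by apply/matrixP => i j; rewrite !mxE gfs.
  rewrite col_permE det_mulmx det_perm odd_permV mulrC.
  by apply/gen_idealMl/gen_ideal_gen; exists f.
rewrite -det_tr (determinant_alternate neq_ij) => [|k]; first exact: gen_ideal0.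
by rewrite !mxE eq_gij.
Qed.

Lemma det_cols_minor_gens (R : comRingType) (r m : nat) (B : 'M[R]_(r, m))
    (M : 'M[R]_r) :
  (forall c, exists j, col c M = col j B) -> gen_ideal (minor_gens B) (\det M).
Proof.
move=> /fin_all_exists [g Mg]; have -> : M = colsub g B.
  apply/matrixP => i c.
  by have := congr1 (fun A : 'cV[R]_r => A i 0) (Mg c); rewrite !mxE.
exact: det_colsub_minor_gens.
Qed.

Lemma mulmx_entry_col (R : pzSemiRingType) p q n (A : 'M[R]_(p, q))
    (B : 'M[R]_(q, n)) i j :
  (A *m B) i j = (A *m col j B) i 0.
Proof. by rewrite colE mulmxA -colE [RHS]mxE. Qed.

Section SetCol.
Variables (R : comRingType) (r : nat).
Implicit Types (M : 'M[R]_r) (u : 'cV[R]_r).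

Definition set_col M (k : 'I_r) u : 'M[R]_r :=
  \matrix_(i, j) if j == k then u i 0 else M i j.

Lemma cofactor_set_col M k u i : cofactor (set_col M k u) i k = cofactor M i k.
Proof.
rewrite /cofactor; congr (_ * \det _); apply/matrixP => p q.
by rewrite !mxE eq_sym (negbTE (neq_lift _ _)).
Qed.

Lemma det_set_col M k u : \det (set_col M k u) = (\adj M *m u) k 0.
Proof.
rewrite (expand_det_col _ k) mxE; apply: eq_bigr => i _.
by rewrite cofactor_set_col !mxE eqxx mulrC.
Qed.

Lemma set_col_id M k : set_col M k (col k M) = M.
Proof. by apply/matrixP => i j; rewrite !mxE; case: eqP => // ->. Qed.

Lemma col_set_col M k u : col k (set_col M k u) = u.
Proof. by apply/matrixP => i j; rewrite !mxE eqxx ord1. Qed.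

Lemma col_set_col_neq M k u c : c != k -> col c (set_col M k u) = col c M.
Proof. by move=> ck; apply/matrixP => i j; rewrite !mxE (negbTE ck). Qed.

End SetCol.

Section Koszul.
Variables (R : comRingType) (r : nat) (a : 'rV[R]_r).

Definition koszul_syz (j l : 'I_r) : 'cV[R]_r :=
  a 0 l *: delta_mx j 0 - a 0 j *: delta_mx l 0.

Lemma mul_koszul_syz j l : a *m koszul_syz j l = 0.
Proof.
rewrite mulmxBr -!scalemxAr -!colE.
by apply/matrixP => x y; rewrite !ord1 !mxE mulrC subrr.
Qed.

(* Cramer's rule for M with column k replaced by e_j, at entry l of a *m M. *)
Lemma det_set_col_koszul (M : 'M[R]_r) k j l :
  gen_ideal (fun y => exists2 c, c != k & y = (a *m M) 0 c)
    (\det (set_col M k (koszul_syz j l))).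
Proof.
pose M0 := set_col M k (delta_mx j 0).
have := congr1 (fun X => (a *m X) 0 l) (mul_mx_adj M0).
rewrite /= mulmxA mul_mx_scalar mxE [in RHS]mxE (bigD1 k) //=.
rewrite mulmx_entry_col col_set_col !det_set_col /koszul_syz.
rewrite mulmxBr -!scalemxAr -!colE.
rewrite [(\adj _) k l]mxE cofactor_set_col !(mxE, ord1) => cramer.
rewrite mulrC -cramer addrC addKr.
apply: gen_ideal_sum => c ck; rewrite mulrC; apply/gen_idealMl/gen_ideal_gen.
by exists c => //; rewrite mulmx_entry_col col_set_col_neq // -mulmx_entry_col.
Qed.

Lemma koszul_shorten (i : 'I_r) (s : 'cV[R]_r) (v : 'I_r -> R) :
  (forall j : 'I_r, (i < j)%N -> s j 0 = 0) ->
  s i 0 = \sum_(j < r | (j < i)%N) v j * a 0 j ->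
  forall j : 'I_r, (i <= j)%N ->
    (s + \sum_(k < r | (k < i)%N) v k *: koszul_syz k i) j 0 = 0.
Proof.
move=> s_supp s_i_eq j le_ij; rewrite !mxE summxE.
rewrite (eq_bigr (fun k => - (v k * a 0 k) * (j == i)%:R)) => [|k lt_ki].
  rewrite -mulr_suml sumrN -s_i_eq.
  have [-> | ne_ji] := eqVneq j i; first by rewrite mulr1 addrN.
  by rewrite mulr0 addr0 s_supp // ltn_neqAle le_ij andbT eq_sym.
rewrite !mxE !andbT.
have -> : (j == k) = false := gtn_eqF (leq_trans lt_ki le_ij).
by rewrite mulr0 sub0r mulrN mulrA mulNr.
Qed.

Hypothesis a_reg : forall (i : 'I_r) (x : R),
  gen_ideal (prefix_gens a i) (a 0 i * x) -> gen_ideal (prefix_gens a i) x.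

Lemma regular_syzygy_entry (i : 'I_r) (s : 'cV[R]_r) :
  a *m s = 0 -> (forall j : 'I_r, (i < j)%N -> s j 0 = 0) ->
  gen_ideal (prefix_gens a i) (s i 0).
Proof.
move=> s_syz s_supp; apply: a_reg.
have /eqP : (a *m s) 0 0 = 0 by rewrite s_syz mxE.
rewrite mxE (bigD1 i) //= addr_eq0 => /eqP ->.
apply/gen_idealN/gen_ideal_sum => j ne_ji.
have [lt_ji | le_ij] := ltnP j i.
  by rewrite mulrC; apply/gen_idealMl/gen_ideal_gen; exists j.
rewrite s_supp ?mulr0; first exact: gen_ideal0.
by rewrite ltn_neqAle le_ij andbT eq_sym.
Qed.

(* Dual form of H_1(a) = 0: the syzygies of a regular sequence are spanned
   by the Koszul syzygies. *)
Lemma regular_syzygy_koszul (S : R -> Prop) (w : 'rV[R]_r) :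
  (forall j l, gen_ideal S ((w *m koszul_syz j l) 0 0)) ->
  forall s : 'cV[R]_r, a *m s = 0 -> gen_ideal S ((w *m s) 0 0).
Proof.
move=> w_koszul.
suff supp_ind n : (n <= r)%N -> forall s : 'cV[R]_r,
    (forall j : 'I_r, (n <= j)%N -> s j 0 = 0) ->
    a *m s = 0 -> gen_ideal S ((w *m s) 0 0).
  by move=> s; apply: (supp_ind r) => // j; rewrite leqNgt ltn_ord.
elim: n => [|n IH] lt_nr s s_supp s_syz.
  have -> : s = 0 by apply/matrixP => j i; rewrite ord1 mxE s_supp.
  by rewrite mulmx0 mxE; apply: gen_ideal0.
pose i : 'I_r := Ordinal lt_nr.
have [|v s_i_eq] := gen_ideal_coefs (P := fun j : 'I_r => (j < i)%N)
    (F := fun j => a 0 j) _ (regular_syzygy_entry (i := i) s_syz s_supp).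
  by move=> y [j [lt_ji ->]]; exists j.
pose u := \sum_(k < r | (k < i)%N) v k *: koszul_syz k i.
have u_syz : a *m u = 0.
  rewrite mulmx_sumr big1 // => k _.
  by rewrite -scalemxAr mul_koszul_syz scaler0.
have -> : s = (s + u) - u by rewrite addrK.
rewrite mulmxBr mulmx_sumr [X in gen_ideal S X]mxE.
rewrite [X in gen_ideal S (_ + X)]mxE.
apply: gen_idealD.
  apply: (IH (ltnW lt_nr)); last by rewrite mulmxDr s_syz u_syz addr0.
  exact: (koszul_shorten (i := i) s_supp s_i_eq).
rewrite summxE; apply/gen_idealN/gen_ideal_sum => k _.
by rewrite -scalemxAr mxE; apply/gen_idealMl/w_koszul.
Qed.

Lemma det_set_col_syzygy (M : 'M[R]_r) k (s : 'cV[R]_r) : a *m s = 0 ->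
  gen_ideal (fun y => exists2 c, c != k & y = (a *m M) 0 c)
    (\det (set_col M k s)).
Proof.
have row_adj u : \det (set_col M k u) = (row k (\adj M) *m u) 0 0.
  by rewrite det_set_col -row_mul [RHS]mxE.
rewrite row_adj; apply: regular_syzygy_koszul => j l.
by rewrite -row_adj; apply: det_set_col_koszul.
Qed.

End Koszul.

Section Minors.
Variables (R : comRingType) (r m : nat) (a : 'rV[R]_r) (B' : 'M[R]_(r, m)).
Hypothesis a_reg : forall (i : 'I_r) (x : R),
  gen_ideal (prefix_gens a i) (a 0 i * x) -> gen_ideal (prefix_gens a i) x.

Local Notation I' := (gen_ideal (gens_union (aB_gens a B') (minor_gens B'))).

Lemma det_mixed_cols n : forall k, (k + n = r)%N -> forall M : 'M[R]_r,
  (forall c : 'I_r, (c < k)%N -> exists j, col c M = col j B') ->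
  (forall c : 'I_r, (k <= c)%N -> gen_ideal (aB_gens a B') ((a *m M) 0 c)) ->
  I' (\det M).
Proof.
elim: n => [|n IH] k kn_r M M_B M_aB.
  apply/gen_ideal_unionr/det_cols_minor_gens => c.
  by apply: M_B; rewrite -[k]addn0 kn_r ltn_ord.
have lt_kr : (k < r)%N by rewrite -kn_r addnS ltnS leq_addr.
pose k' : 'I_r := Ordinal lt_kr.
have [|v aM_k] := gen_ideal_coefs (P := predT) (F := fun j => (a *m B') 0 j) _
    (M_aB k' (leqnn k)).
  by move=> y [j ->]; exists j.
pose u := B' *m \col_j v j.
have s_syz : a *m (col k' M - u) = 0.
  rewrite mulmxBr; apply/eqP; rewrite subr_eq0; apply/eqP/matrixP => i0 j0.
  rewrite !ord1 -mulmx_entry_col aM_k mulmxA mxE; apply: eq_bigr => j _.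
  by rewrite [X in _ = _ * X]mxE mulrC.
have -> : \det M = \det (set_col M k' u) + \det (set_col M k' (col k' M - u)).
  rewrite -{1}(set_col_id M k') !det_set_col mulmxBr.
  by rewrite [X in _ + X]mxE [X in _ + (_ + X)]mxE addrC subrK.
apply: gen_idealD.
  have -> : \det (set_col M k' u) = \sum_j v j * \det (set_col M k' (col j B')).
    rewrite det_set_col mulmxA mxE; apply: eq_bigr => j _.
    by rewrite det_set_col -mulmx_entry_col !mxE mulrC.
  apply: gen_ideal_sum => j _.
  apply/gen_idealMl/(IH k.+1) => [|c lt_ck|c lt_kc]; first by rewrite addSnnS.
    have [-> | ne_ck] := eqVneq c k'; first by exists j; rewrite col_set_col.
    rewrite col_set_col_neq //; apply: M_B.
    by rewrite ltn_neqAle -(ltnS c k) lt_ck andbT.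
  have ne_ck : c != k' by apply: contraTneq lt_kc => ->; rewrite ltnn.
  rewrite mulmx_entry_col col_set_col_neq // -mulmx_entry_col.
  exact/M_aB/ltnW.
apply: (gen_ideal_trans _ (det_set_col_syzygy a_reg M k' s_syz)).
move=> _ [c ne_ck ->].
apply: gen_ideal_unionl; have [lt_ck | le_kc] := ltnP c k; last exact: M_aB.
have [j Mj] := M_B c lt_ck; apply: gen_ideal_gen; exists j.
by rewrite mulmx_entry_col Mj -mulmx_entry_col.
Qed.

Lemma minor_gens_sub n (B : 'M[R]_(r, n)) :
  (forall x, gen_ideal (aB_gens a B) x -> gen_ideal (aB_gens a B') x) ->
  forall y, minor_gens B y -> I' y.
Proof.
move=> aB_sub _ [f [_ ->]]; apply: (det_mixed_cols (k := 0)) => // c _.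
apply/aB_sub/gen_ideal_gen; exists (f c).
by rewrite !mxE; apply: eq_bigr => i _; rewrite mxE.
Qed.

Lemma aB_minors_sub n (B : 'M[R]_(r, n)) :
  (forall x, gen_ideal (aB_gens a B) x -> gen_ideal (aB_gens a B') x) ->
  forall x, gen_ideal (gens_union (aB_gens a B) (minor_gens B)) x -> I' x.
Proof.
move=> aB_sub x.
apply: gen_ideal_trans => y [aB_y | /(minor_gens_sub aB_sub)//].
exact/gen_ideal_unionl/aB_sub/gen_ideal_gen.
Qed.

End Minors.

Unset Implicit Arguments.

Theorem lemma4p4 (R : comRingType) (r n m : nat) (a : 'rV[R]_r)
  (B : 'M[R]_(r, n)) (B' : 'M[R]_(r, m)) :
  regular_seq a ->
  (forall x, gen_ideal (aB_gens a B) x <-> gen_ideal (aB_gens a B') x) ->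
  forall x,
    gen_ideal (gens_union (aB_gens a B) (minor_gens B)) x <->
    gen_ideal (gens_union (aB_gens a B') (minor_gens B')) x.
Proof.
move=> [a_reg _] aB_eq x.
by split; apply: aB_minors_sub => // y; case: (aB_eq y).
Qed.
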